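(* Let $\{x_t\}$ be generated by the OE method (described in the context) and let $\{\theta_t\}$ be a sequence of nonnegative numbers. Suppose that for all $t=1,\dots,k$, $$\theta_{t+1}\gamma_{t+1}\lambda_{t+1}=\gamma_t\theta_t \qquad\text{and}\qquad \theta_{t-1}\ge 4L^2\theta_t\gamma_t^2\lambda_t^2 .$$ Then for every $x\in X$, $$\sum_{t=1}^k\theta_t\Big[\gamma_t\langle F(x_{t+1}),x_{t+1}-x\rangle+V(x_{t+1},x)\Big]-L^2\theta_k\gamma_k^2\|x_{k+1}-x\|^2\le\sum_{t=1}^k\theta_tV(x_t,x).$$
   Context: Let $X\subseteq\mathbb{R}^n$ be a nonempty closed convex set and $\|\cdot\|$ a norm on $\mathbb{R}^n$ with dual norm $\|z\|_*=\sup\{\langle x,z\rangle:\|x\|\le 1\}$. Let $F:X\to\mathbb{R}^n$ satisfy $\|F(x_1)-F(x_2)\|_*\le L\|x_1-x_2\|$ for all $x_1,x_2\in X$, for some $L>0$. Let $\omega$ be a function on $X$ that is strongly convex with modulus $1$ with respect to $\|\cdot\|$, and define the Bregman distance $V(x,y)=\omega(y)-\omega(x)-\langle\omega'(x),y-x\rangle$ for $x,y\in X$, where $\omega'(x)\in\partial\omega(x)$. The operator extrapolation (OE) method: given $x_0=x_1\in X$ and nonnegative parameters $\{\gamma_t\},\{\lambda_t\}$, for $t=1,\dots,k$ set $$x_{t+1}=\operatorname{argmin}_{x\in X}\ \gamma_t\big\langle F(x_t)+\lambda_t\big(F(x_t)-F(x_{t-1})\big),x\big\rangle+V(x_t,x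).$$
   Formalization: ω′ is also the derivative of ω along feasible directions on X: for x, y ∈ X, (ω(x+s(y−x))−ω(x))/s tends to ⟨ω′(x), y−x⟩ as s → 0⁺. The statement above fails without it. *)

From HB Require Import structures.
From mathcomp Require Import all_boot all_order all_algebra.
From mathcomp Require Import all_classical all_reals all_analysis.
Set Implicit Arguments. Unset Strict Implicit. Unset Printing Implicit Defensive.
Import Order.TTheory GRing.Theory Num.Theory.
Import numFieldNormedType.Exports.
Local Open Scope classical_set_scope.
Local Open Scope ring_scope.

Definition dotv (R : realType) (n : nat) (x z : 'rV[R]_n) : R :=
  \sum_(i < n) x ord0 i * z ord0 i.

Definition is_norm (R : realType) (n : nat) (N : 'rV[R]_n -> R) : Prop :=
  [/\ (forall x, N x = 0 -> x = 0),
      (forall (a : R) x, N (a *: x) = `|a| * N x) &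
      (forall x y, N (x + y) <= N x + N y)].

Definition dual_norm (R : realType) (n : nat) (N : 'rV[R]_n -> R)
  (z : 'rV[R]_n) : R :=
  sup [set dotv x z | x in [set x | N x <= 1]].

Definition is_convex_set (R : realType) (n : nat) (X : set 'rV[R]_n) : Prop :=
  forall x y (a : R), X x -> X y -> 0 <= a <= 1 -> X (a *: x + (1 - a) *: y).

Definition strongly_convex_on (R : realType) (n : nat) (N : 'rV[R]_n -> R)
  (X : set 'rV[R]_n) (omega : 'rV[R]_n -> R) (mu : R) : Prop :=
  forall x y (a : R), X x -> X y -> 0 <= a <= 1 ->
    omega (a *: x + (1 - a) *: y) <=
    a * omega x + (1 - a) * omega y - mu / 2 * a * (1 - a) * N (x - y) ^+ 2.

Definition subgrad_on (R : realType) (n : nat) (X : set 'rV[R]_n)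
  (omega : 'rV[R]_n -> R) (x g : 'rV[R]_n) : Prop :=
  forall y, X y -> omega x + dotv g (y - x) <= omega y.

Definition deriv_on (R : realType) (n : nat) (X : set 'rV[R]_n)
  (omega : 'rV[R]_n -> R) (omega' : 'rV[R]_n -> 'rV[R]_n) : Prop :=
  forall x y, X x -> X y ->
    (fun s : R => (omega (x + s *: (y - x)) - omega x) / s) @ 0^'+
      --> dotv (omega' x) (y - x).

Definition bregman (R : realType) (n : nat) (omega : 'rV[R]_n -> R)
  (omega' : 'rV[R]_n -> 'rV[R]_n) (x y : 'rV[R]_n) : R :=
  omega y - omega x - dotv (omega' x) (y - x).

Definition OE_iterates (R : realType) (n : nat) (X : set 'rV[R]_n)
  (F : 'rV[R]_n -> 'rV[R]_n) (omega : 'rV[R]_n -> R)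
  (omega' : 'rV[R]_n -> 'rV[R]_n) (gamma lambda : nat -> R) (k : nat)
  (xs : nat -> 'rV[R]_n) : Prop :=
  [/\ X (xs 1%N), xs 0%N = xs 1%N &
      forall t : nat, (1 <= t <= k)%N ->
        let g := F (xs t) + lambda t *: (F (xs t) - F (xs t.-1)) in
        X (xs t.+1) /\
        forall y, X y ->
          gamma t * dotv g (xs t.+1) + bregman omega omega' (xs t) (xs t.+1)
          <= gamma t * dotv g y + bregman omega omega' (xs t) y].

(* The proximal step is a Bregman projection, so the three-point inequality
   bounds each step.  In that bound the extrapolation term
   lambda_t (F x_t - F x_{t-1}) splits into a part that telescopes under the
   weights theta_t (because theta_{t+1} gamma_{t+1} lambda_{t+1} = theta_t gamma_t)
   and a cross term; Lipschitz continuity of F, the strong convexity bound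
   V(x_t, x_{t+1}) >= N(x_{t+1} - x_t)^2 / 2 and Young's inequality (using
   theta_{t-1} >= 4 L^2 theta_t gamma_t^2 lambda_t^2) absorb the cross term.
   The boundary term left at t = k is at most L^2 theta_k gamma_k^2 N(x_{k+1} - x)^2,
   again by Young's inequality.  Finite dimension is used only for
   <z, v> <= N_*(z) N(v): the supremum defining the dual norm is finite because
   N is equivalent to the sup norm. *)

From HB Require Import structures.
From mathcomp Require Import all_boot all_order all_algebra.
From mathcomp Require Import all_classical all_reals all_analysis.
From mathcomp Require Import lra zify.
Set Implicit Arguments. Unset Strict Implicit. Unset Printing Implicit Defensive.
Import Order.TTheory GRing.Theory Num.Theory.
Import numFieldNormedType.Exports.
Local Open Scope classical_set_scope.
Local Open Scope ring_scope.

Lemma entry_le_mx_norm (R : realDomainType) (n : nat) (x : 'rV[R]_n) i :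
  `|x ord0 i| <= `|x|.
Proof. by rewrite [leRHS]/Num.norm /= mx_normrE (le_bigmax _ _ (ord0, i)). Qed.

Lemma ler_of_forall_ler_addZ (R : realFieldType) (a b c : R) :
  (forall s, 0 < s <= 1 -> a <= b + s * c) -> a <= b.
Proof.
move=> H; apply/ler_addgt0Pr => e e0.
pose s := e / (e + `|c|).
have ec0 : 0 < e + `|c| by rewrite ltr_wpDr.
have s0 : 0 < s by rewrite divr_gt0.
have s1 : s <= 1 by rewrite ler_pdivrMr // mul1r lerDl.
have sc : s * c <= e.
  apply: le_trans (ler_wpM2l (ltW s0) (ler_norm c)) _.
  by rewrite mulrAC ler_pdivrMr // ler_pM2l // lerDr ltW.
have := H s; rewrite s0 s1 => /(_ isT) /le_trans; apply.
by rewrite lerD2l.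
Qed.

Section InnerProduct.
Variables (R : realType) (n : nat).
Implicit Types (x y z : 'rV[R]_n).

Lemma dotvC x z : dotv x z = dotv z x.
Proof. by apply: eq_bigr => i _; rewrite mulrC. Qed.

Lemma dotvDl x y z : dotv (x + y) z = dotv x z + dotv y z.
Proof. by rewrite /dotv -big_split; apply: eq_bigr => i _; rewrite mxE mulrDl. Qed.

Lemma dotvZl (a : R) x z : dotv (a *: x) z = a * dotv x z.
Proof. by rewrite /dotv mulr_sumr; apply: eq_bigr => i _; rewrite mxE mulrA. Qed.

Lemma dotvNl x z : dotv (- x) z = - dotv x z.
Proof. by rewrite -scaleN1r dotvZl mulN1r. Qed.

Lemma dotvBl x y z : dotv (x - y) z = dotv x z - dotv y z.
Proof. by rewrite dotvDl dotvNl. Qed.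

Lemma dotv0l z : dotv 0 z = 0.
Proof. by rewrite -(scale0r 0) dotvZl mul0r. Qed.

Lemma dotvDr x y z : dotv z (x + y) = dotv z x + dotv z y.
Proof. by rewrite !(dotvC z) dotvDl. Qed.

Lemma dotvZr (a : R) x z : dotv z (a *: x) = a * dotv z x.
Proof. by rewrite !(dotvC z) dotvZl. Qed.

Lemma dotvNr x z : dotv z (- x) = - dotv z x.
Proof. by rewrite !(dotvC z) dotvNl. Qed.

End InnerProduct.

Section NormEquivalence.
Variables (R : realType) (n : nat) (N : 'rV[R]_n -> R).
Hypothesis normN : is_norm N.

Lemma is_norm0 : N 0 = 0.
Proof. by case: normN => _ hZ _; rewrite -(scale0r 0) hZ normr0 mul0r. Qed.

Lemma is_normN x : N (- x) = N x.
Proof. by case: normN => _ hZ _; rewrite -scaleN1r hZ normrN normr1 mul1r. Qed.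

Lemma is_norm_ge0 x : 0 <= N x.
Proof.
case: normN => _ _ hD; have := hD x (- x).
by rewrite subrr is_norm0 is_normN; lra.
Qed.

Lemma is_norm_dist x y : `|N x - N y| <= N (x - y).
Proof.
case: normN => _ _ hD; rewrite ler_norml; apply/andP; split.
- by have := hD (y - x) x; rewrite subrK -opprB is_normN; lra.
- by have := hD (x - y) y; rewrite subrK; lra.
Qed.

Lemma is_norm_le_mx_norm : exists M, forall x, N x <= M * `|x|.
Proof.
case: normN => _ hZ hD.
exists (\sum_(i < n) N (delta_mx ord0 i)) => x.
rewrite {1}(row_sum_delta x) mulr_suml.
elim/big_ind2: _ => [|a b c d|i _]; first by rewrite is_norm0.
  by move=> ab cd; apply: le_trans (hD _ _) _; exact: lerD.
by rewrite hZ mulrC ler_wpM2l ?is_norm_ge0 ?entry_le_mx_norm.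
Qed.

Lemma is_norm_continuous : continuous N.
Proof.
have [M HM] := is_norm_le_mx_norm.
have M1 : 0 < `|M| + 1 by rewrite ltr_wpDl.
move=> x; apply/(@cvgrPdist_le _ R^o _ (nbhs x) _ N (N x)) => e e0.
have : \forall t \near x, `|x - t| <= e / (`|M| + 1).
  apply: (proj1 (@cvgrPdist_le _ _ _ (nbhs x) _ id x) (@cvg_id _ (nbhs x))).
  by rewrite divr_gt0.
apply: filterS => t; rewrite ler_pdivlMr // => Ht.
apply: le_trans (is_norm_dist _ _) _; apply: le_trans (HM _) _.
apply: le_trans (ler_wpM2r (normr_ge0 _) (ler_norm M)) _.
by apply: le_trans Ht; rewrite mulrC; apply: ler_wpM2l; rewrite ?lerDl.
Qed.

Lemma is_norm_ge_mx_norm : exists2 C, 0 < C & forall x, `|x| <= C * N x.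
Proof.
case: normN => N_eq0 hZ _.
pose S := [set v : 'rV[R]_n | `|v| = 1].
have normalize_in x : x != 0 -> S (`|x|^-1 *: x).
  move=> x0; rewrite /S /= normrZ normrV ?unitfE ?normr_eq0 //.
  by rewrite normr_id mulVf // normr_eq0.
have [[v0 Sv0]|S0] := pselect (S !=set0); last first.
  exists 1 => // x; have [->|x0] := eqVneq x 0; first by rewrite normr0 is_norm0 mulr0.
  by exfalso; apply: S0; exists (`|x|^-1 *: x); exact: normalize_in.
have cS : compact S.
  apply: bounded_closed_compact; first by exists 1; split => // M M1 v /= ->; exact: ltW.
  have -> : S = (@Num.norm _ 'rV[R]_n) @^-1` [set x : R | x = 1] by [].
  by apply: preimage_closed; [move=> v _; exact: norm_continuous | exact: closed_eq].
have [c /set_mem Sc cmin] :=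
  EVT_min_rV (ex_intro _ v0 Sv0) cS (continuous_subspaceT is_norm_continuous).
have Nc_gt0 : 0 < N c.
  rewrite lt_def is_norm_ge0 andbT; apply/eqP => /N_eq0 c0.
  by move: Sc; rewrite /S /= c0 normr0 => /esym/eqP; rewrite oner_eq0.
exists (N c)^-1 => [|x]; first by rewrite invr_gt0.
have [->|x0] := eqVneq x 0; first by rewrite normr0 is_norm0 mulr0.
have x_gt0 : 0 < `|x| by rewrite normr_gt0.
have := cmin _ (mem_set (normalize_in x x0)).
rewrite hZ normrV ?unitfE ?normr_eq0 // normr_id ler_pdivlMl // => Ncx.
by rewrite ler_pdivlMl // mulrC.
Qed.

Lemma dotv_le_dual_norm z v : dotv z v <= dual_norm N z * N v.
Proof.
case: normN => N_eq0 hZ _.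
have [C C_gt0 HC] := is_norm_ge_mx_norm.
pose E := [set dotv x z | x in [set x | N x <= 1]].
have ubE : has_ubound E.
  exists (\sum_(i < n) C * `|z ord0 i|) => _ [x /= Nx1 <-].
  apply: ler_sum => i _; apply: le_trans (ler_norm _) _.
  rewrite normrM ler_wpM2r //; apply: le_trans (entry_le_mx_norm x i) _.
  by apply: le_trans (HC x) _; rewrite ler_piMr // ltW.
rewrite dotvC; have [/N_eq0 ->|Nv0] := eqVneq (N v) 0.
  by rewrite dotv0l is_norm0 mulr0.
have Nv_gt0 : 0 < N v by rewrite lt_def Nv0 is_norm_ge0.
have : E (dotv ((N v)^-1 *: v) z).
  exists ((N v)^-1 *: v) => //=.
  by rewrite hZ ger0_norm ?invr_ge0 ?is_norm_ge0 // mulVf.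
move/(ub_le_sup ubE); rewrite dotvZl mulrC ler_pdivrMr //.
Qed.

End NormEquivalence.

Lemma convex_comb_shift (R : realType) (n : nat) (s : R) (a b : 'rV[R]_n) :
  s *: b + (1 - s) *: a = a + s *: (b - a).
Proof. by rewrite scalerBl scale1r scalerBr addrCA. Qed.

Section Bregman.
Variables (R : realType) (n : nat) (X : set 'rV[R]_n).
Variables (omega : 'rV[R]_n -> R) (omega' : 'rV[R]_n -> 'rV[R]_n).
Hypothesis convexX : is_convex_set X.
Local Notation V := (bregman omega omega').

Lemma bregman_ge_half_sqr_norm (N : 'rV[R]_n -> R) a b :
  strongly_convex_on N X omega 1 ->
  (forall x, X x -> subgrad_on X omega x (omega' x)) ->
  X a -> X b -> N (b - a) ^+ 2 / 2 <= V a b.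
Proof.
move=> convex1 subgrad Xa Xb.
apply: (@ler_of_forall_ler_addZ _ _ _ (N (b - a) ^+ 2 / 2)) => s /andP[s0 s1].
have s01 : 0 <= s <= 1 by rewrite ltW.
have := convex1 b a s Xb Xa s01.
have := subgrad a Xa _ (convexX Xb Xa s01).
rewrite !convex_comb_shift addrAC subrr add0r dotvZr /bregman.
move=> ? ?.
rewrite -(ler_pM2l s0); lra.
Qed.

(* First-order optimality of the minimiser [w] in the direction [x - w],
   combined with the three-point identity of Bregman distances. *)
Lemma bregman_prox_three_point (gam : R) g u w x :
  deriv_on X omega omega' -> X w -> X x ->
  (forall y, X y -> gam * dotv g w + V u w <= gam * dotv g y + V u y) ->
  gam * dotv g (w - x) + V u w + V w x <= V u x.
Proof.
move=> derivX Xw Xx wmin; set d := x - w.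
have optimality : dotv (omega' u) d - gam * dotv g d <= dotv (omega' w) d.
  apply: (cvgr_to_ge (derivX w x Xw Xx)); near=> s.
  have s0 : 0 < s by near: s; exact: nbhs_right_gt.
  have s1 : s < 1 by near: s; exact: nbhs_right_lt.
  have s01 : 0 <= s <= 1 by rewrite (ltW s0) (ltW s1).
  have := wmin _ (convexX Xx Xw s01).
  rewrite convex_comb_shift /bregman -/d ler_pdivlMr //.
  have -> : w + s *: d - u = (w - u) + s *: d by rewrite addrAC.
  rewrite [dotv g (_ + _)]dotvDr [dotv _ (_ + s *: d)]dotvDr !dotvZr.
  lra.
rewrite /bregman.
have -> : x - u = d + (w - u) by rewrite addrA subrK.
have -> : w - x = - d by rewrite opprB.
rewrite -/d [dotv _ (d + _)]dotvDr dotvNr.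
lra.
Unshelve. all: by end_near.
Qed.

End Bregman.

Lemma young_cross_term (R : realFieldType) (th th' c r r' : R) :
  0 <= th -> 4 * c ^+ 2 * th <= th' ->
  c * th * r' * r <= th * r ^+ 2 / 4 + th' * r' ^+ 2 / 4.
Proof.
move=> th0 th'_ge.
have : 0 <= th * (r / 2 - c * r') ^+ 2 by rewrite mulr_ge0 ?sqr_ge0.
have : 4 * c ^+ 2 * th * r' ^+ 2 <= th' * r' ^+ 2 by rewrite ler_wpM2r ?sqr_ge0.
nra.
Qed.

Lemma ler_sum_telescope (R : numDomainType) (a b Q : nat -> R) (k : nat) :
  (forall t, (1 <= t <= k)%N -> a t <= b t + (Q t - Q t.-1)) ->
  \sum_(1 <= t < k.+1) a t <= \sum_(1 <= t < k.+1) b t + (Q k - Q 0%N).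
Proof.
move=> le_ab.
have -> : Q k - Q 0%N = \sum_(1 <= t < k.+1) (Q t - Q t.-1).
  by rewrite (@telescope_sumr_eq _ _ _ (fun t => Q t.-1)).
by rewrite -big_split; apply: ler_sum_nat => t /le_ab.
Qed.

Section OperatorExtrapolation.
Variables (R : realType) (n : nat) (X : set 'rV[R]_n) (N : 'rV[R]_n -> R).
Variables (F : 'rV[R]_n -> 'rV[R]_n) (L : R).
Variables (omega : 'rV[R]_n -> R) (omega' : 'rV[R]_n -> 'rV[R]_n).
Variables (gamma lambda theta : nat -> R) (k : nat) (xs : nat -> 'rV[R]_n).
Variable x : 'rV[R]_n.
Hypotheses (convexX : is_convex_set X) (normN : is_norm N).
Hypothesis F_lipschitz : forall x1 x2, X x1 -> X x2 ->
  dual_norm N (F x1 - F x2) <= L * N (x1 - x2).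
Hypothesis omega_convex : strongly_convex_on N X omega 1.
Hypothesis omega_subgrad : forall x, X x -> subgrad_on X omega x (omega' x).
Hypothesis omega_deriv : deriv_on X omega omega'.
Hypotheses (gamma_ge0 : forall t, 0 <= gamma t) (lambda_ge0 : forall t, 0 <= lambda t).
Hypothesis theta_ge0 : forall t, 0 <= theta t.
Hypothesis iterates : OE_iterates X F omega omega' gamma lambda k xs.
Hypothesis stepsizes : forall t : nat, (1 <= t <= k)%N ->
  theta t.+1 * gamma t.+1 * lambda t.+1 = gamma t * theta t /\
  4 * L ^+ 2 * theta t * gamma t ^+ 2 * lambda t ^+ 2 <= theta t.-1.
Hypothesis Xx : X x.

Local Notation V := (bregman omega omega').
Let D t := F (xs t) - F (xs t.-1).
Let r t := N (xs t.+1 - xs t).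

Definition oe_potential (t : nat) : R :=
  theta t * gamma t * dotv (F (xs t.+1) - F (xs t)) (xs t.+1 - x)
  - theta t * N (xs t.+1 - xs t) ^+ 2 / 4.

Lemma oe_iterate_in t : (t <= k.+1)%N -> X (xs t).
Proof.
case: iterates => X1 x01 step; case: t => [|[|t]] tk; rewrite ?x01 //.
by have [] := step t.+1 tk.
Qed.

Lemma oe_step_expanded t : (1 <= t <= k)%N ->
  gamma t * dotv (F (xs t.+1)) (xs t.+1 - x) + V (xs t.+1) x
  <= V (xs t) x + gamma t * dotv (D t.+1) (xs t.+1 - x)
     - gamma t * lambda t * dotv (D t) (xs t - x)
     - gamma t * lambda t * dotv (D t) (xs t.+1 - xs t) - V (xs t) (xs t.+1).
Proof.
move=> tk; case: iterates => _ _ /(_ t tk) [Xt1 prox].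
have := bregman_prox_three_point convexX omega_deriv Xt1 Xx prox.
rewrite -/(D t) dotvDl dotvZl [dotv (D t.+1) _]dotvBl.
have -> : xs t.+1 - x = (xs t - x) + (xs t.+1 - xs t).
  by rewrite [RHS]addrC addrA subrK.
rewrite [dotv (D t) _]dotvDr.
lra.
Qed.

Lemma oe_extrapolation_weight t : (1 <= t <= k)%N ->
  theta t * gamma t * lambda t * dotv (D t) (xs t - x)
  = theta t.-1 * gamma t.-1 * dotv (D t) (xs t - x).
Proof.
case: iterates => _ x01 _; case: t => [|[|t]] //= tk.
  by rewrite /D /= x01 subrr dotv0l !mulr0.
by have [-> _] := @stepsizes t.+1 (ltnW tk); rewrite (mulrC (gamma _)).
Qed.

Lemma oe_cross_term t : (1 <= t <= k)%N ->
  theta t * gamma t * lambda t * - dotv (D t) (xs t.+1 - xs t)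
    - theta t * V (xs t) (xs t.+1)
  <= theta t.-1 * r t.-1 ^+ 2 / 4 - theta t * r t ^+ 2 / 4.
Proof.
move=> tk; have /andP[t_ge1 t_le] := tk.
have Xt : X (xs t) by apply: oe_iterate_in; lia.
have Xt1 : X (xs t.+1) by apply: oe_iterate_in; lia.
have Xtm : X (xs t.-1) by apply: oe_iterate_in; lia.
have dual_D : - dotv (D t) (xs t.+1 - xs t) <= L * r t.-1 * r t.
  rewrite -dotvNr; apply: le_trans (dotv_le_dual_norm normN _ _) _.
  rewrite is_normN // ler_wpM2r ?is_norm_ge0 //.
  by rewrite /r prednK //; exact: F_lipschitz.
have V_ge := bregman_ge_half_sqr_norm convexX omega_convex omega_subgrad Xt Xt1.
have [_ theta_ge] := stepsizes tk.
have young : L * gamma t * lambda t * theta t * r t.-1 * r t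
    <= theta t * r t ^+ 2 / 4 + theta t.-1 * r t.-1 ^+ 2 / 4.
  by apply: young_cross_term (theta_ge0 t) _; lra.
have := ler_wpM2l (theta_ge0 t) V_ge.
have := ler_wpM2l (mulr_ge0 (mulr_ge0 (theta_ge0 t) (gamma_ge0 t)) (lambda_ge0 t)) dual_D.
rewrite -/(r t); lra.
Qed.

Lemma oe_step t : (1 <= t <= k)%N ->
  theta t * (gamma t * dotv (F (xs t.+1)) (xs t.+1 - x) + V (xs t.+1) x)
  <= theta t * V (xs t) x + (oe_potential t - oe_potential t.-1).
Proof.
move=> tk; have /andP[t_ge1 _] := tk.
have := ler_wpM2l (theta_ge0 t) (oe_step_expanded tk).
have := oe_extrapolation_weight tk.
have := oe_cross_term tk.
rewrite /oe_potential /D /r /= prednK //.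
lra.
Qed.

Lemma oe_potential0 : oe_potential 0 = 0.
Proof.
case: iterates => _ x01 _.
by rewrite /oe_potential x01 !subrr dotv0l is_norm0 // expr0n /= !(mulr0, mul0r) subr0.
Qed.

Lemma oe_potential_le t : (t <= k)%N ->
  oe_potential t <= L ^+ 2 * theta t * gamma t ^+ 2 * N (xs t.+1 - x) ^+ 2.
Proof.
move=> tk.
have Xt : X (xs t) by apply: oe_iterate_in; lia.
have Xt1 : X (xs t.+1) by apply: oe_iterate_in; lia.
have dual_D : dotv (F (xs t.+1) - F (xs t)) (xs t.+1 - x) <= L * r t * N (xs t.+1 - x).
  apply: le_trans (dotv_le_dual_norm normN _ _) _.
  by rewrite ler_wpM2r ?is_norm_ge0 //; exact: F_lipschitz.
have young : L * gamma t * theta t * N (xs t.+1 - x) * r t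
    <= theta t * r t ^+ 2 / 4 + 4 * (L * gamma t) ^+ 2 * theta t * N (xs t.+1 - x) ^+ 2 / 4.
  exact: young_cross_term.
have := ler_wpM2l (mulr_ge0 (theta_ge0 t) (gamma_ge0 t)) dual_D.
rewrite /oe_potential -/(r t); lra.
Qed.

End OperatorExtrapolation.

Theorem proposition2p1 (R : realType) (n : nat)
  (X : set 'rV[R]_n) (N : 'rV[R]_n -> R) (F : 'rV[R]_n -> 'rV[R]_n) (L : R)
  (omega : 'rV[R]_n -> R) (omega' : 'rV[R]_n -> 'rV[R]_n)
  (gamma lambda theta : nat -> R) (k : nat) (xs : nat -> 'rV[R]_n) :
  X !=set0 -> closed X -> is_convex_set X ->
  is_norm N ->
  0 < L ->
  (forall x1 x2, X x1 -> X x2 ->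
     dual_norm N (F x1 - F x2) <= L * N (x1 - x2)) ->
  strongly_convex_on N X omega 1 ->
  (forall x, X x -> subgrad_on X omega x (omega' x)) ->
  deriv_on X omega omega' ->
  (forall t, 0 <= gamma t) -> (forall t, 0 <= lambda t) ->
  (forall t, 0 <= theta t) ->
  OE_iterates X F omega omega' gamma lambda k xs ->
  (forall t : nat, (1 <= t <= k)%N ->
     theta t.+1 * gamma t.+1 * lambda t.+1 = gamma t * theta t /\
     4 * L ^+ 2 * theta t * gamma t ^+ 2 * lambda t ^+ 2 <= theta t.-1) ->
  forall x, X x ->
    \sum_(1 <= t < k.+1)
        theta t * (gamma t * dotv (F (xs t.+1)) (xs t.+1 - x)
                   + bregman omega omega' (xs t.+1) x)
      - L ^+ 2 * theta k * gamma k ^+ 2 * N (xs k.+1 - x) ^+ 2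
    <= \sum_(1 <= t < k.+1) theta t * bregman omega omega' (xs t) x.
Proof.
move=> _ _ convexX normN _ F_lipschitz omega_convex omega_subgrad omega_deriv
  gamma_ge0 lambda_ge0 theta_ge0 iterates stepsizes x Xx.
have := ler_sum_telescope (oe_step convexX normN F_lipschitz omega_convex
  omega_subgrad omega_deriv gamma_ge0 lambda_ge0 theta_ge0 iterates stepsizes Xx).
rewrite (oe_potential0 theta x normN iterates) subr0.
have := oe_potential_le x normN F_lipschitz gamma_ge0 theta_ge0 iterates (leqnn k).
lra.
Qed.
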